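(* Let $\frac14\le a\le b$. For any $t\ge\frac1{10}$, \[ \mathcal{R}_I(t,a,b) = O\!\left(\frac{\sqrt b}{t}\right). \]
   Context: Write $a = \frac14+\alpha^2$, $b=\frac14+\beta^2$ with $0\le\alpha\le\beta$. For $t>0$ and $r\in\mathbb{C}$, $h_t(r) = \frac{t}{\sqrt\pi}\int_\alpha^\beta\exp(-t^2(r-\rho)^2)\,d\rho$, and \[ \mathcal{R}_I(t,a,b) = \frac{1}{4\pi}\int_0^{+\infty}\big(h_t(r)+h_t(-r) - \mathbf{1}_{[\alpha,\beta]}(r)\big)\,r\tanh(\pi r)\,dr. \] $T_1=O(T_2)$ means $|T_1|\le CT_2$ with a universal constant $C$ independent of $a,b,t$. *)

From Stdlib Require Import Reals.
From Coquelicot Require Import Coquelicot.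
Open Scope R_scope.

Definition tanhR (x : R) : R := (exp x - exp (- x)) / (exp x + exp (- x)).

(* a = 1/4 + alpha^2, alpha >= 0 *)
Definition spec_param (a : R) : R := sqrt (a - / 4).

Definition h_t (t alpha beta r : R) : R :=
  t / sqrt PI * RInt (fun rho => exp (- (t ^ 2 * (r - rho) ^ 2))) alpha beta.

Definition ind_cc (alpha beta r : R) : R :=
  if Rle_dec alpha r then (if Rle_dec r beta then 1 else 0) else 0.

Definition RI_integrand (t a b : R) (r : R) : R :=
  let alpha := spec_param a in let beta := spec_param b in
  (h_t t alpha beta r + h_t t alpha beta (- r) - ind_cc alpha beta r)
    * r * tanhR (PI * r).

Definition R_I (t a b : R) : R :=
  / (4 * PI) * RInt_gen (RI_integrand t a b) (at_point 0) (Rbar_locally p_infty).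

From Stdlib Require Import Reals Lra Psatz Classical.
From Coquelicot Require Import Coquelicot.
Open Scope R_scope.

(* With Φ(y) = π^{-1/2} ∫_0^y e^{-u²} du we have h_t(r) = Φ(t(r-α)) - Φ(t(r-β)).
   The identity (∫_0^x e^{-u²})² + ∫_0^1 e^{-x²(1+s²)}/(1+s²) ds = π/4
   (differentiate in x) gives Φ(±∞) = ±1/2 with a Gaussian tail, so for r >= 0 the
   bracket h_t(r) + h_t(-r) - 1_[α,β](r) is dominated by a sum of the four terms
   ⟨t(r-c)⟩^{-3}, c = ±α, ±β, where ⟨y⟩ = √(1+y²).  Each r ⟨t(r-c)⟩^{-3} has an
   explicit primitive whose increments are at most 2|c|/t + 1/t², so by comparison the
   improper integral converges and is O((α+β)/t + 1/t²) = O(√b/t) for t >= 1/10. *)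

Lemma nondecreasing_bounded_cauchy (G : R -> R) (a B : R) :
  (forall u v, a <= u <= v -> G u <= G v) -> (forall v, a <= v -> G v <= B) ->
  forall eps, 0 < eps -> exists M, a <= M /\ forall u v, M <= u <= v -> G v - G u < eps.
Proof.
  intros Hmon Hbd eps Heps.
  destruct (completeness (fun y => exists x, a <= x /\ y = G x)) as [S [Hub Hlub]].
  - exists B; intros y [x [Hx ->]]; apply Hbd, Hx.
  - exists (G a), a; split; [lra | reflexivity].
  - destruct (classic (exists x, a <= x /\ S - eps < G x)) as [[M [HaM HM]] | Hnone].
    + exists M; split; [exact HaM|]; intros u v Huv.
      assert (G v <= S) by (apply Hub; exists v; split; [lra | reflexivity]).
      assert (G M <= G u) by (apply Hmon; lra).
      lra.
    + assert (S <= S - eps); [|lra].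
      apply Hlub; intros y [x [Hx ->]].
      apply Rnot_lt_le; intros Hlt; apply Hnone; exists x; split; assumption.
Qed.

Lemma is_RInt_gen_of_lim (f : R -> R) (a l : R) :
  (forall X, a <= X -> ex_RInt f a X) ->
  filterlim (fun X => RInt f a X) (Rbar_locally p_infty) (locally l) ->
  is_RInt_gen f (at_point a) (Rbar_locally p_infty) l.
Proof.
  intros Hex Hl; unfold is_RInt_gen.
  apply filterlimi_lim_ext_loc with (f := fun ab => RInt f (fst ab) (snd ab)).
  - apply Filter_prod with (fun x => x = a) (fun y => a < y); [reflexivity | exists a; auto|].
    intros x y -> Hy; apply (RInt_correct (V := R_CompleteNormedModule)), Hex; simpl; lra.
  - apply filterlim_ext_loc with (fun ab => RInt f a (snd ab)).
    + apply Filter_prod with (fun x => x = a) (fun _ => True); [reflexivity | exists a; auto|].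
      intros x y -> _; reflexivity.
    + eapply filterlim_comp; [apply filterlim_snd | exact Hl].
Qed.

Section DominatedImproperIntegral.

Variables (f g G : R -> R) (a B : R).
Hypothesis f_ex : forall X, a <= X -> ex_RInt f a X.
Hypothesis f_dominated : forall x, a <= x -> Rabs (f x) <= g x.
Hypothesis G_primitive : forall u v, a <= u <= v -> is_RInt g u v (G v - G u).
Hypothesis G_bounded : forall v, a <= v -> G v - G a <= B.

Lemma abs_RInt_le_primitive (u v : R) : a <= u <= v -> Rabs (RInt f u v) <= G v - G u.
Proof.
  intros Huv.
  assert (Hex : ex_RInt f u v) by (apply (ex_RInt_Chasles_2 f a); [lra | apply f_ex; lra]).
  apply (norm_RInt_le f g u v); [lra | | apply (RInt_correct (V := R_CompleteNormedModule)), Hex |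
    apply G_primitive, Huv].
  intros x Hx; apply f_dominated; lra.
Qed.

Lemma abs_RInt_sub_le_primitive (u v : R) :
  a <= u <= v -> Rabs (RInt f a v - RInt f a u) <= G v - G u.
Proof.
  intros Huv.
  assert (H := RInt_Chasles (V := R_CompleteNormedModule) f a u v
    (f_ex u ltac:(lra)) (ex_RInt_Chasles_2 f a u v ltac:(lra) (f_ex v ltac:(lra)))).
  simpl in H; unfold plus in H; simpl in H.
  replace (RInt f a v - RInt f a u) with (RInt f u v) by lra.
  apply abs_RInt_le_primitive, Huv.
Qed.

Lemma dominated_improper_integral :
  ex_RInt_gen f (at_point a) (Rbar_locally p_infty) /\
  Rabs (RInt_gen f (at_point a) (Rbar_locally p_infty)) <= B.
Proof.
  assert (Hmon : forall u v, a <= u <= v -> G u <= G v).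
  { intros u v Huv; assert (H := abs_RInt_le_primitive u v Huv).
    assert (0 <= Rabs (RInt f u v)) by apply Rabs_pos; lra. }
  assert (Hpart : forall X, a <= X -> Rabs (RInt f a X) <= B).
  { intros X HX; eapply Rle_trans; [apply abs_RInt_le_primitive; lra | apply G_bounded, HX]. }
  assert (Hlim : exists l, filterlim (fun X => RInt f a X) (Rbar_locally p_infty) (locally l)).
  { apply (filterlim_locally_cauchy (U := R_CompleteSpace)); intros eps.
    destruct (nondecreasing_bounded_cauchy G a (G a + B) Hmon) with eps as [M [HaM HM]];
      [intros v Hv; generalize (G_bounded v Hv); lra | apply cond_pos |].
    exists (fun X => M < X); split; [exists M; auto|].
    intros u v Hu Hv; change (Rabs (RInt f a v - RInt f a u) < eps).
    destruct (Rle_or_lt u v).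
    - eapply Rle_lt_trans; [apply abs_RInt_sub_le_primitive; lra | apply HM; lra].
    - rewrite Rabs_minus_sym.
      eapply Rle_lt_trans; [apply abs_RInt_sub_le_primitive; lra | apply HM; lra]. }
  destruct Hlim as [l Hl].
  assert (Hgen := is_RInt_gen_of_lim f a l f_ex Hl).
  split; [exists l; exact Hgen|].
  rewrite (is_RInt_gen_unique (V := R_CompleteNormedModule) f l Hgen).
  assert (Hev : Rbar_locally p_infty (fun X => - B <= RInt f a X <= B))
    by (exists a; intros X HX; apply Rabs_le_between, Hpart; lra).
  apply Rabs_le_between; split.
  - apply (filterlim_le (F := Rbar_locally p_infty) (fun _ => - B) (fun X => RInt f a X) (- B) l);
      [| apply filterlim_const | exact Hl].
    eapply filter_imp; [|exact Hev]; simpl; intros X HX; apply HX.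
  - apply (filterlim_le (F := Rbar_locally p_infty) (fun X => RInt f a X) (fun _ => B) l B);
      [| exact Hl | apply filterlim_const].
    eapply filter_imp; [|exact Hev]; simpl; intros X HX; apply HX.
Qed.

End DominatedImproperIntegral.

Lemma exp_le_1 (y : R) : y <= 0 -> exp y <= 1.
Proof.
  intros Hy; destruct (Rle_lt_or_eq_dec _ _ Hy) as [Hlt | ->].
  - rewrite <- exp_0; left; apply exp_increasing, Hlt.
  - rewrite exp_0; lra.
Qed.

Definition gauss (u : R) : R := exp (- u ^ 2).

Definition gauss_int (x : R) : R := RInt gauss 0 x.

Lemma continuous_gauss (x : R) : continuous gauss x.
Proof. apply (ex_derive_continuous gauss); unfold gauss; auto_derive; auto. Qed.

Lemma ex_RInt_gauss (a b : R) : ex_RInt gauss a b.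
Proof.
  apply (ex_RInt_continuous (V := R_CompleteNormedModule)); intros; apply continuous_gauss.
Qed.

Lemma is_derive_gauss_int (x : R) : is_derive gauss_int x (gauss x).
Proof.
  apply is_derive_RInt with 0; [|apply continuous_gauss].
  apply filter_forall; intros; apply (RInt_correct (V := R_CompleteNormedModule)), ex_RInt_gauss.
Qed.

Lemma RInt_gauss (x y : R) : RInt gauss x y = gauss_int y - gauss_int x.
Proof.
  unfold gauss_int.
  assert (H := RInt_Chasles (V := R_CompleteNormedModule) gauss 0 x y
    (ex_RInt_gauss _ _) (ex_RInt_gauss _ _)).
  simpl in H; unfold plus in H; simpl in H; lra.
Qed.

Lemma gauss_int_ge0 (x : R) : 0 <= x -> 0 <= gauss_int x.
Proof. intros Hx; apply RInt_ge_0; auto using ex_RInt_gauss; intros; apply Rlt_le, exp_pos. Qed.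

Lemma gauss_int_opp (x : R) : gauss_int (- x) = - gauss_int x.
Proof.
  assert (H := RInt_comp_lin (V := R_CompleteNormedModule) gauss (-1) 0 0 x (ex_RInt_gauss _ _)).
  replace (-1 * 0 + 0) with 0 in H by ring; replace (-1 * x + 0) with (- x) in H by ring.
  unfold gauss_int; rewrite <- H.
  rewrite (RInt_ext (V := R_CompleteNormedModule) _ (fun y => scal (-1) (gauss y))).
  - rewrite (RInt_scal (V := R_CompleteNormedModule)) by apply ex_RInt_gauss.
    unfold scal; simpl; unfold mult; simpl; ring.
  - intros y _; unfold gauss.
    replace ((-1 * y + 0) ^ 2) with (y ^ 2) by ring; reflexivity.
Qed.

Definition gauss_defect_integrand (x s : R) : R :=
  exp (- (x ^ 2 * (1 + s ^ 2))) / (1 + s ^ 2).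

Definition gauss_defect (x : R) : R := RInt (gauss_defect_integrand x) 0 1.

Lemma is_derive_gauss_defect_integrand (x s : R) :
  is_derive (fun u => gauss_defect_integrand u s) x (-2 * x * exp (- (x ^ 2 * (1 + s ^ 2)))).
Proof.
  unfold gauss_defect_integrand; auto_derive; [nra|].
  replace (x * (x * 1) * (1 + s * (s * 1))) with (x ^ 2 * (1 + s ^ 2)) by ring.
  field; nra.
Qed.

Lemma continuous_2d_gauss_defect_deriv (x s : R) :
  continuity_2d_pt (fun u v => -2 * u * exp (- (u ^ 2 * (1 + v ^ 2)))) x s.
Proof.
  apply continuity_2d_pt_mult; [apply continuity_2d_pt_mult;
    [apply continuity_2d_pt_const | apply continuity_2d_pt_id1]|].
  apply continuity_1d_2d_pt_comp with (f := exp) (g := fun u v => - (u ^ 2 * (1 + v ^ 2))).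
  { apply derivable_continuous_pt, derivable_pt_exp. }
  apply continuity_2d_pt_opp, continuity_2d_pt_mult.
  - apply continuity_2d_pt_mult; [apply continuity_2d_pt_id1|].
    apply continuity_2d_pt_mult; [apply continuity_2d_pt_id1 | apply continuity_2d_pt_const].
  - apply continuity_2d_pt_plus; [apply continuity_2d_pt_const|].
    apply continuity_2d_pt_mult; [apply continuity_2d_pt_id2|].
    apply continuity_2d_pt_mult; [apply continuity_2d_pt_id2 | apply continuity_2d_pt_const].
Qed.

Lemma is_derive_gauss_defect (x : R) :
  is_derive gauss_defect x (-2 * gauss x * gauss_int x).
Proof.
  assert (Hex : forall y, ex_RInt (gauss_defect_integrand y) 0 1).
  { intros y; apply (ex_RInt_continuous (V := R_CompleteNormedModule)); intros s _.
    apply (ex_derive_continuous (gauss_defect_integrand y)).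
    unfold gauss_defect_integrand; auto_derive; nra. }
  replace (-2 * gauss x * gauss_int x) with
    (RInt (fun s => Derive (fun u => gauss_defect_integrand u s) x) 0 1).
  { apply is_derive_RInt_param.
    - apply filter_forall; intros y s _; eexists; apply is_derive_gauss_defect_integrand.
    - intros s _; eapply continuity_2d_pt_ext; [|apply continuous_2d_gauss_defect_deriv].
      intros u v; symmetry; apply is_derive_unique, is_derive_gauss_defect_integrand.
    - apply filter_forall; intros y; apply Hex. }
  (* the substitution u = x s turns the integral of the x-derivative into -2 e^{-x²} gauss_int x *)
  rewrite (RInt_ext (V := R_CompleteNormedModule) _
    (fun s => scal (-2 * gauss x) (scal x (gauss (x * s + 0))))).
  - rewrite (RInt_scal (V := R_CompleteNormedModule)).
    2: apply (ex_RInt_comp_lin (V := R_CompleteNormedModule)), ex_RInt_gauss.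
    rewrite (RInt_comp_lin (V := R_CompleteNormedModule)) by apply ex_RInt_gauss.
    replace (x * 0 + 0) with 0 by ring; replace (x * 1 + 0) with x by ring.
    reflexivity.
  - intros s _.
    transitivity (-2 * x * exp (- (x ^ 2 * (1 + s ^ 2)))).
    { apply is_derive_unique, is_derive_gauss_defect_integrand. }
    unfold gauss; replace (- (x ^ 2 * (1 + s ^ 2))) with (- x ^ 2 + - (x * s + 0) ^ 2) by ring.
    rewrite exp_plus; unfold scal; simpl; unfold mult; simpl; ring.
Qed.

Lemma gauss_defect_0 : gauss_defect 0 = PI / 4.
Proof.
  unfold gauss_defect.
  rewrite (RInt_ext (V := R_CompleteNormedModule) _ (fun s => / (1 + s ^ 2))).
  - rewrite (is_RInt_unique (V := R_CompleteNormedModule) _ _ _ (atan 1 - atan 0)).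
    { rewrite atan_1, atan_0; simpl; lra. }
    apply (is_RInt_derive (V := R_CompleteNormedModule) atan); intros s _.
    + replace (1 + s ^ 2) with (1 + s²) by (unfold Rsqr; ring); apply is_derive_atan.
    + apply (ex_derive_continuous (fun s => / (1 + s ^ 2))); auto_derive; nra.
  - intros s _; unfold gauss_defect_integrand.
    replace (- (0 ^ 2 * (1 + s ^ 2))) with 0 by ring; rewrite exp_0; apply Rmult_1_l.
Qed.

Lemma gauss_int_sq_add_defect (x : R) : gauss_int x ^ 2 + gauss_defect x = PI / 4.
Proof.
  set (H u := gauss_int u ^ 2 + gauss_defect u).
  assert (dH : forall u, is_derive H u 0).
  { intros u.
    evar (d : R); replace 0 with d; subst d.
    - apply (is_derive_plus (fun u => gauss_int u ^ 2)).
      + apply (is_derive_pow gauss_int 2), is_derive_gauss_int.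
      + apply is_derive_gauss_defect.
    - unfold plus; simpl; ring. }
  assert (H0 : H 0 = PI / 4).
  { unfold H, gauss_int; rewrite gauss_defect_0, (RInt_point (V := R_CompleteNormedModule)).
    unfold zero; simpl; ring. }
  rewrite <- H0.
  destruct (Rtotal_order x 0) as [Hx | [-> | Hx]].
  - apply (eq_is_derive H); auto.
  - reflexivity.
  - symmetry; apply (eq_is_derive H); auto.
Qed.

Lemma gauss_defect_bounds (x : R) : 0 <= gauss_defect x <= gauss x.
Proof.
  assert (Hex : ex_RInt (gauss_defect_integrand x) 0 1).
  { apply (ex_RInt_continuous (V := R_CompleteNormedModule)); intros s _.
    apply (ex_derive_continuous (gauss_defect_integrand x)).
    unfold gauss_defect_integrand; auto_derive; nra. }
  split.
  - apply RInt_ge_0; auto; [lra|]; intros s _; unfold gauss_defect_integrand.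
    apply Rdiv_le_0_compat; [apply Rlt_le, exp_pos | nra].
  - replace (gauss x) with (RInt (fun _ => gauss x) 0 1)
      by (rewrite (RInt_const (V := R_CompleteNormedModule)); simpl; unfold scal; simpl;
          unfold mult; simpl; ring).
    apply RInt_le; auto; [lra | apply ex_RInt_const |].
    intros s _; unfold gauss_defect_integrand, gauss.
    replace (- (x ^ 2 * (1 + s ^ 2))) with (- x ^ 2 + - (x * s) ^ 2) by ring.
    rewrite exp_plus.
    assert (exp (- (x * s) ^ 2) <= 1) by (apply exp_le_1; nra).
    assert (0 < exp (- x ^ 2)) by apply exp_pos.
    apply Rle_div_l; nra.
Qed.

Definition half_erf (y : R) : R := gauss_int y / sqrt PI.

Lemma half_erf_tail (y : R) : 0 <= y -> 0 <= 1 / 2 - half_erf y <= 2 * gauss y / PI.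
Proof.
  intros Hy; unfold half_erf.
  assert (Hs : 0 < sqrt PI) by (apply sqrt_lt_R0, PI_RGT_0).
  assert (Hss : sqrt PI * sqrt PI = PI) by (apply sqrt_sqrt; left; apply PI_RGT_0).
  assert (HA := gauss_int_ge0 y Hy).
  assert (HD := gauss_defect_bounds y).
  assert (Hsum := gauss_int_sq_add_defect y).
  set (s := sqrt PI) in *; set (A := gauss_int y) in *.
  (* (s/2 - A)(s/2 + A) = π/4 - A² lies in [0, e^{-y²}], and s/2 + A >= s/2 *)
  assert (Hle : 0 <= s / 2 - A) by nra.
  assert (Hprod : (s / 2 - A) * s <= 2 * gauss y) by nra.
  rewrite <- Hss; split.
  - apply Rmult_le_reg_r with s; [lra|]; field_simplify; lra.
  - apply Rmult_le_reg_r with (s * s); [nra|]; field_simplify; nra.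
Qed.

Definition inv_bracket3 (y : R) : R := / ((1 + y ^ 2) * sqrt (1 + y ^ 2)).

Lemma sqrt_1_add_sq (y : R) :
  1 <= sqrt (1 + y ^ 2) /\ sqrt (1 + y ^ 2) * sqrt (1 + y ^ 2) = 1 + y ^ 2.
Proof.
  assert (Hsq : sqrt (1 + y ^ 2) * sqrt (1 + y ^ 2) = 1 + y ^ 2) by (apply sqrt_sqrt; nra).
  assert (0 <= sqrt (1 + y ^ 2)) by apply sqrt_pos.
  split; [nra | exact Hsq].
Qed.

Lemma inv_bracket3_pos (y : R) : 0 < inv_bracket3 y.
Proof. destruct (sqrt_1_add_sq y); apply Rinv_0_lt_compat; nra. Qed.

Lemma inv_bracket3_opp (y : R) : inv_bracket3 (- y) = inv_bracket3 y.
Proof. unfold inv_bracket3; replace ((- y) ^ 2) with (y ^ 2) by ring; reflexivity. Qed.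

Lemma ex_derive_inv_bracket3 (y : R) : ex_derive inv_bracket3 y.
Proof.
  destruct (sqrt_1_add_sq y) as [Hs1 _].
  unfold inv_bracket3; auto_derive; replace (1 + y * (y * 1)) with (1 + y ^ 2) by ring.
  repeat split; [nra | apply Rgt_not_eq; nra].
Qed.

Lemma gauss_le_inv_bracket3 (y : R) : gauss y <= 4 * inv_bracket3 y.
Proof.
  destruct (sqrt_1_add_sq y) as [Hs1 Hss].
  (* e^{y²} = (e^{y²/2})² >= (1 + y²/2)² >= (1 + y²)² / 4 >= (1 + y²)^{3/2} / 4 *)
  assert (Hhalf := exp_ineq1_le (y ^ 2 / 2)).
  assert (Hexp : exp (y ^ 2) = exp (y ^ 2 / 2) * exp (y ^ 2 / 2))
    by (rewrite <- exp_plus; f_equal; field).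
  assert (Hsq : (1 + y ^ 2 / 2) * (1 + y ^ 2 / 2) <= exp (y ^ 2 / 2) * exp (y ^ 2 / 2))
    by (apply Rmult_le_compat; nra).
  assert (Hs : sqrt (1 + y ^ 2) <= 1 + y ^ 2) by nra.
  assert (Hlow : (1 + y ^ 2) * sqrt (1 + y ^ 2) <= 4 * exp (y ^ 2)) by nra.
  unfold gauss, inv_bracket3; rewrite exp_Ropp.
  assert (0 < exp (y ^ 2)) by apply exp_pos.
  assert (0 < (1 + y ^ 2) * sqrt (1 + y ^ 2)) by nra.
  set (P := (1 + y ^ 2) * sqrt (1 + y ^ 2)) in *.
  apply Rmult_le_reg_r with (exp (y ^ 2) * P); [apply Rmult_lt_0_compat; lra|].
  replace (/ exp (y ^ 2) * (exp (y ^ 2) * P)) with P by (field; lra).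
  replace (4 * / P * (exp (y ^ 2) * P)) with (4 * exp (y ^ 2)) by (field; lra).
  exact Hlow.
Qed.

Lemma half_erf_sub_half (y : R) : 0 <= y -> Rabs (half_erf y - 1 / 2) <= 4 * inv_bracket3 y.
Proof.
  intros Hy; destruct (half_erf_tail y Hy) as [Hlo Hhi].
  assert (Hg := gauss_le_inv_bracket3 y); assert (Hb := inv_bracket3_pos y).
  assert (HPI : 2 < PI) by (generalize PI2_1; lra).
  assert (2 * gauss y / PI <= 4 * inv_bracket3 y).
  { apply Rle_div_l; [lra|]; nra. }
  rewrite Rabs_left1; lra.
Qed.

Lemma half_erf_add_half (y : R) : y <= 0 -> Rabs (half_erf y + 1 / 2) <= 4 * inv_bracket3 y.
Proof.
  intros Hy; rewrite <- inv_bracket3_opp, <- Rabs_Ropp.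
  replace (- (half_erf y + 1 / 2)) with (half_erf (- y) - 1 / 2)
    by (unfold half_erf; rewrite gauss_int_opp; field; apply Rgt_not_eq, sqrt_lt_R0, PI_RGT_0).
  apply half_erf_sub_half; lra.
Qed.

Lemma h_t_half_erf (t al be r : R) :
  0 < t -> h_t t al be r = half_erf (t * (r - al)) - half_erf (t * (r - be)).
Proof.
  intros Ht; unfold h_t, half_erf.
  assert (Hex : ex_RInt (fun y => gauss (- t * y + t * r)) al be)
    by (apply (ex_RInt_continuous (V := R_CompleteNormedModule)); intros y _;
        apply (ex_derive_continuous (fun y => gauss (- t * y + t * r)));
        unfold gauss; auto_derive; auto).
  assert (H := RInt_comp_lin (V := R_CompleteNormedModule) gauss (- t) (t * r) al be
    (ex_RInt_gauss _ _)).
  rewrite (RInt_scal (V := R_CompleteNormedModule)), RInt_gauss in H by exact Hex.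
  replace (- t * al + t * r) with (t * (r - al)) in H by ring.
  replace (- t * be + t * r) with (t * (r - be)) in H by ring.
  rewrite (RInt_ext (V := R_CompleteNormedModule) _ (fun y => gauss (- t * y + t * r)))
    by (intros y _; unfold gauss; f_equal; ring).
  assert (Hs : 0 < sqrt PI) by (apply sqrt_lt_R0, PI_RGT_0).
  set (I := RInt (fun y => gauss (- t * y + t * r)) al be) in *.
  change (scal (- t) I) with (- t * I) in H.
  replace (t / sqrt PI * I) with ((- t * I) / - sqrt PI) by (field; lra).
  rewrite H; field; lra.
Qed.

Definition spectral_majorant (t al be r : R) : R :=
  4 * (inv_bracket3 (t * (r - al)) + inv_bracket3 (t * (r - be))
       + inv_bracket3 (t * (r + al)) + inv_bracket3 (t * (r + be))).

Lemma h_t_even_part_bound (t al be r : R) : 0 < t -> 0 <= al <= be -> 0 <= r ->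
  Rabs (h_t t al be r + h_t t al be (- r) - ind_cc al be r) <= spectral_majorant t al be r.
Proof.
  intros Ht Hab Hr; rewrite !h_t_half_erf by exact Ht; unfold spectral_majorant.
  assert (Hneg : forall c, 0 <= c ->
    Rabs (half_erf (t * (- r - c)) + 1 / 2) <= 4 * inv_bracket3 (t * (r + c))).
  { intros c Hc; rewrite <- inv_bracket3_opp.
    replace (- (t * (r + c))) with (t * (- r - c)) by ring.
    apply half_erf_add_half; nra. }
  assert (Hma := Hneg al ltac:(lra)); assert (Hmb := Hneg be ltac:(lra)).
  apply Rabs_le_between in Hma; apply Rabs_le_between in Hmb; apply Rabs_le_between.
  unfold ind_cc; destruct (Rle_dec al r); [destruct (Rle_dec r be)|].
  - assert (Ha := half_erf_sub_half (t * (r - al)) ltac:(nra)).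
    assert (Hb := half_erf_add_half (t * (r - be)) ltac:(nra)).
    apply Rabs_le_between in Ha; apply Rabs_le_between in Hb; lra.
  - assert (Ha := half_erf_sub_half (t * (r - al)) ltac:(nra)).
    assert (Hb := half_erf_sub_half (t * (r - be)) ltac:(nra)).
    apply Rabs_le_between in Ha; apply Rabs_le_between in Hb; lra.
  - assert (Ha := half_erf_add_half (t * (r - al)) ltac:(nra)).
    assert (Hb := half_erf_add_half (t * (r - be)) ltac:(nra)).
    apply Rabs_le_between in Ha; apply Rabs_le_between in Hb; lra.
Qed.

Lemma tanhR_abs_le_1 (x : R) : Rabs (tanhR x) <= 1.
Proof.
  unfold tanhR; assert (0 < exp x) by apply exp_pos; assert (0 < exp (- x)) by apply exp_pos.
  rewrite Rabs_div, (Rabs_pos_eq (exp x + exp (- x))) by lra.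
  apply Rle_div_l; [lra|]; apply Rabs_le_between; lra.
Qed.

Lemma RI_integrand_abs_le (t a b r : R) :
  0 < t -> 0 <= spec_param a <= spec_param b -> 0 <= r ->
  Rabs (RI_integrand t a b r) <= r * spectral_majorant t (spec_param a) (spec_param b) r.
Proof.
  intros Ht Hab Hr; unfold RI_integrand; cbv zeta.
  rewrite !Rabs_mult, (Rabs_pos_eq r Hr).
  assert (Hd := h_t_even_part_bound t _ _ r Ht Hab Hr).
  assert (Htanh := tanhR_abs_le_1 (PI * r)).
  assert (0 <= Rabs (tanhR (PI * r))) by apply Rabs_pos.
  set (D := Rabs (_ - ind_cc _ _ r)) in *.
  assert (0 <= D) by apply Rabs_pos.
  apply Rle_trans with (D * r); [|nra].
  rewrite <- (Rmult_1_r (D * r)) at 2; apply Rmult_le_compat_l; nra.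
Qed.

Definition bracket_primitive (t c r : R) : R :=
  c / t * (t * (r - c) / sqrt (1 + (t * (r - c)) ^ 2))
  - / t ^ 2 * / sqrt (1 + (t * (r - c)) ^ 2).

Lemma is_derive_bracket_primitive (t c r : R) :
  0 < t -> is_derive (bracket_primitive t c) r (r * inv_bracket3 (t * (r - c))).
Proof.
  intros Ht; unfold bracket_primitive, inv_bracket3.
  assert (Hr : r = c + t * (r - c) / t) by (field; lra).
  destruct (sqrt_1_add_sq (t * (r - c))) as [Hs1 Hss].
  auto_derive; replace (r + - c) with (r - c) by ring;
    replace (1 + t * (r - c) * (t * (r - c) * 1)) with (1 + (t * (r - c)) ^ 2) by ring.
  - repeat split; [nra | lra | nra | lra].
  - set (y := t * (r - c)) in *; set (s := sqrt (1 + y ^ 2)) in *.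
    rewrite Hr, <- Hss; clearbody s y; field_simplify; [|repeat split; apply Rgt_not_eq; nra ..].
    replace (s ^ 2) with (1 + y ^ 2) by (rewrite <- Hss; ring); field; lra.
Qed.

Lemma bracket_ratio_bounds (y : R) :
  Rabs (y / sqrt (1 + y ^ 2)) <= 1 /\ 0 < / sqrt (1 + y ^ 2) <= 1.
Proof.
  destruct (sqrt_1_add_sq y) as [Hs1 Hss]; set (s := sqrt (1 + y ^ 2)) in *.
  split; [|split; [apply Rinv_0_lt_compat; lra | rewrite <- Rinv_1; apply Rinv_le_contravar; lra]].
  rewrite Rabs_div, (Rabs_pos_eq s) by lra.
  apply Rle_div_l; [lra|].
  assert (Hy2 : Rabs y * Rabs y = y ^ 2)
    by (rewrite <- Rabs_mult, Rabs_pos_eq; nra).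
  assert (0 <= Rabs y) by apply Rabs_pos.
  nra.
Qed.

Lemma bracket_primitive_variation (t c u v : R) :
  0 < t -> bracket_primitive t c v - bracket_primitive t c u <= 2 * Rabs c / t + / t ^ 2.
Proof.
  intros Ht; unfold bracket_primitive.
  destruct (bracket_ratio_bounds (t * (v - c))) as [Hqv Hiv].
  destruct (bracket_ratio_bounds (t * (u - c))) as [Hqu Hiu].
  set (qv := t * (v - c) / _) in *; set (qu := t * (u - c) / _) in *.
  set (iv := / sqrt _) in Hiv |- *; set (iu := / sqrt _) in Hiu |- *.
  assert (Hq : Rabs (qv - qu) <= 2)
    by (eapply Rle_trans; [apply Rabs_triang | rewrite Rabs_Ropp; lra]).
  assert (Hc : c / t * (qv - qu) <= 2 * Rabs c / t).
  { eapply Rle_trans; [apply Rle_abs|].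
    rewrite Rabs_mult, Rabs_div, (Rabs_pos_eq t) by lra.
    assert (0 <= Rabs c / t) by (apply Rdiv_le_0_compat; [apply Rabs_pos | lra]).
    unfold Rdiv in *; nra. }
  assert (Hi : / t ^ 2 * (iu - iv) <= / t ^ 2).
  { assert (0 < / t ^ 2) by (apply Rinv_0_lt_compat; nra); nra. }
  lra.
Qed.

Definition spectral_majorant_primitive (t al be r : R) : R :=
  4 * (bracket_primitive t al r + bracket_primitive t be r
       + bracket_primitive t (- al) r + bracket_primitive t (- be) r).

Lemma is_derive_spectral_majorant_primitive (t al be r : R) : 0 < t ->
  is_derive (spectral_majorant_primitive t al be) r (r * spectral_majorant t al be r).
Proof.
  intros Ht; unfold spectral_majorant, spectral_majorant_primitive.
  replace (r + al) with (r - - al) by ring; replace (r + be) with (r - - be) by ring.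
  match goal with |- is_derive _ _ (r * (4 * (?a + ?b + ?c + ?d))) =>
    replace (r * (4 * (a + b + c + d))) with (4 * (r * a + r * b + r * c + r * d)) by ring end.
  apply is_derive_scal.
  repeat apply (is_derive_plus (K := R_AbsRing) (V := R_NormedModule));
    apply is_derive_bracket_primitive, Ht.
Qed.

Lemma is_RInt_spectral_majorant (t al be u v : R) : 0 < t ->
  is_RInt (fun r => r * spectral_majorant t al be r) u v
    (spectral_majorant_primitive t al be v - spectral_majorant_primitive t al be u).
Proof.
  intros Ht; apply (is_RInt_derive (V := R_CompleteNormedModule)); intros r _.
  - apply is_derive_spectral_majorant_primitive, Ht.
  - apply (ex_derive_continuous (fun r => r * spectral_majorant t al be r)).
    unfold spectral_majorant; auto_derive; repeat split; apply ex_derive_inv_bracket3.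
Qed.

Lemma spectral_majorant_primitive_variation (t al be u v : R) : 0 < t -> 0 <= al -> 0 <= be ->
  spectral_majorant_primitive t al be v - spectral_majorant_primitive t al be u
    <= 16 * (al + be) / t + 16 / t ^ 2.
Proof.
  intros Ht Hal Hbe; unfold spectral_majorant_primitive.
  assert (Va := bracket_primitive_variation t al u v Ht).
  assert (Vb := bracket_primitive_variation t be u v Ht).
  assert (Vma := bracket_primitive_variation t (- al) u v Ht).
  assert (Vmb := bracket_primitive_variation t (- be) u v Ht).
  rewrite Rabs_Ropp in Vma, Vmb; rewrite Rabs_pos_eq in Va, Vb, Vma, Vmb by lra.
  unfold Rdiv in *; lra.
Qed.

Lemma ex_derive_half_erf (y : R) : ex_derive half_erf y.
Proof.
  exists (gauss y / sqrt PI); unfold half_erf.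
  apply (is_derive_ext (fun y => / sqrt PI * gauss_int y)); [intros; apply Rmult_comm|].
  replace (gauss y / sqrt PI) with (/ sqrt PI * gauss y) by (unfold Rdiv; ring).
  apply is_derive_scal, is_derive_gauss_int.
Qed.

Definition smooth_integrand (t al be k r : R) : R :=
  (half_erf (t * (r - al)) - half_erf (t * (r - be))
   + (half_erf (t * (- r - al)) - half_erf (t * (- r - be))) - k) * r * tanhR (PI * r).

Lemma continuous_smooth_integrand (t al be k r : R) : continuous (smooth_integrand t al be k) r.
Proof.
  apply (ex_derive_continuous (smooth_integrand t al be k)).
  unfold smooth_integrand, tanhR; auto_derive; repeat split; try apply ex_derive_half_erf.
  assert (0 < exp (PI * r)) by apply exp_pos; assert (0 < exp (- (PI * r))) by apply exp_pos.
  lra.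
Qed.

Lemma ex_RInt_RI_integrand_piece (t a b u v k : R) : 0 < t -> u <= v ->
  (forall r, u < r < v -> ind_cc (spec_param a) (spec_param b) r = k) ->
  ex_RInt (RI_integrand t a b) u v.
Proof.
  intros Ht Huv Hk.
  apply (ex_RInt_ext (smooth_integrand t (spec_param a) (spec_param b) k)).
  - intros r Hr; rewrite Rmin_left, Rmax_right in Hr by lra.
    rewrite <- (Hk r Hr); unfold RI_integrand, smooth_integrand; cbv zeta.
    rewrite !h_t_half_erf by exact Ht; reflexivity.
  - apply (ex_RInt_continuous (V := R_CompleteNormedModule)); intros.
    apply continuous_smooth_integrand.
Qed.

Lemma ex_RInt_RI_integrand (t a b X : R) : 0 < t -> spec_param a <= spec_param b -> 0 <= X ->
  ex_RInt (RI_integrand t a b) 0 X.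
Proof.
  intros Ht Hab HX.
  assert (Hal : 0 <= spec_param a) by apply sqrt_pos.
  apply (ex_RInt_Chasles_1 (V := R_CompleteNormedModule) _ 0 X (Rmax X (spec_param b)));
    [split; [lra | apply Rmax_l]|].
  assert (Hb := Rmax_r X (spec_param b)).
  apply (ex_RInt_Chasles (V := R_CompleteNormedModule) _ 0 (spec_param a));
    [|apply (ex_RInt_Chasles (V := R_CompleteNormedModule) _ (spec_param a) (spec_param b))].
  - apply (ex_RInt_RI_integrand_piece _ _ _ _ _ 0 Ht Hal).
    intros r Hr; unfold ind_cc; destruct (Rle_dec (spec_param a) r); [lra | reflexivity].
  - apply (ex_RInt_RI_integrand_piece _ _ _ _ _ 1 Ht Hab).
    intros r Hr; unfold ind_cc.
    destruct (Rle_dec (spec_param a) r); [destruct (Rle_dec r (spec_param b))|]; lra.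
  - apply (ex_RInt_RI_integrand_piece _ _ _ _ _ 0 Ht Hb).
    intros r Hr; unfold ind_cc.
    destruct (Rle_dec (spec_param a) r); [destruct (Rle_dec r (spec_param b))|]; lra.
Qed.

Lemma R_I_scaling_bound (a b t L : R) : / 4 <= a <= b -> / 10 <= t ->
  Rabs L <= 16 * (spec_param a + spec_param b) / t + 16 / t ^ 2 ->
  Rabs (/ (4 * PI) * L) <= 44 * sqrt b / t.
Proof.
  intros [Ha Hab] Ht HL.
  assert (HPI : 2 < PI) by (generalize PI2_1; lra).
  assert (Hsa : spec_param a <= sqrt b) by (apply sqrt_le_1_alt; lra).
  assert (Hsb : spec_param b <= sqrt b) by (apply sqrt_le_1_alt; lra).
  assert (Hb : / 2 <= sqrt b).
  { rewrite <- (sqrt_pow2 (/ 2)) by lra; apply sqrt_le_1_alt; lra. }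
  assert (Hit : 0 < / t <= 10).
  { split; [apply Rinv_0_lt_compat; lra|].
    rewrite <- (Rinv_inv 10); apply Rinv_le_contravar; lra. }
  assert (Hi : 0 < / (4 * PI) <= / 8)
    by (split; [apply Rinv_0_lt_compat | apply Rinv_le_contravar]; lra).
  assert (HL' : Rabs L <= 352 * sqrt b * / t).
  { unfold Rdiv in HL; replace (16 * / t ^ 2) with (16 * / t * / t) in HL by (field; lra).
    assert (0 <= spec_param a) by apply sqrt_pos.
    nra. }
  rewrite Rabs_mult, (Rabs_pos_eq (/ (4 * PI))) by lra.
  assert (0 <= Rabs L) by apply Rabs_pos.
  unfold Rdiv; nra.
Qed.

Theorem proposition4p2 :
  exists C : R, forall a b t : R,
    / 4 <= a -> a <= b -> / 10 <= t ->
    ex_RInt_gen (RI_integrand t a b) (at_point 0) (Rbar_locally p_infty) /\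
    Rabs (R_I t a b) <= C * sqrt b / t.
Proof.
  exists 44; intros a b t Ha Hab Ht.
  assert (Ht0 : 0 < t) by lra.
  assert (Hal : 0 <= spec_param a) by apply sqrt_pos.
  assert (Hbe : spec_param a <= spec_param b) by (apply sqrt_le_1_alt; lra).
  destruct (dominated_improper_integral (RI_integrand t a b)
    (fun r => r * spectral_majorant t (spec_param a) (spec_param b) r)
    (spectral_majorant_primitive t (spec_param a) (spec_param b)) 0
    (16 * (spec_param a + spec_param b) / t + 16 / t ^ 2)) as [Hex Hbound].
  - intros X HX; apply ex_RInt_RI_integrand; assumption.
  - intros r Hr; apply RI_integrand_abs_le; auto.
  - intros u v _; apply is_RInt_spectral_majorant, Ht0.
  - intros v _; apply spectral_majorant_primitive_variation; auto; lra.
  - split; [exact Hex|].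
    unfold R_I; apply (R_I_scaling_bound a b t); auto.
Qed.
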